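(* Let $R$ be a ring and $S$ a (left and right) Ore set in $R$. Then: (1) $\mathcal J(R,S)\neq\emptyset$; (2) $\mathfrak p(S)$ is the least element (w.r.t. inclusion) of $\mathcal J(R,S)$; (3) if, in addition, $S$ is a left and right denominator set with $\mathrm{ass}(S)=\mathfrak a$, then $\mathfrak p(S)=\mathfrak a$.
   Context: Rings are associative with $1$. A multiplicatively closed subset $S$ ($1\in S$, $0\notin S$) is an Ore set if $Sr\cap Rs\ne\emptyset$ and $rS\cap sR\ne\emptyset$ for all $r\in R,s\in S$. It is a (left and right) denominator set if moreover $rs=0$ ($s\in S$) implies $tr=0$ for some $t\in S$, and $sr=0$ implies $rt=0$ for some $t\in S$; then $\mathrm{ass}(S):=\{r\mid sr=0 \text{ for some } s\in S\}$. For a ring $B$ and $T\subseteq B$, $\mathrm{ass}_l(T,B):=\{b\mid tb=0\text{ for some }t\in T\}$, $\mathrm{ass}_r(T,B):=\{b\mid bt=0\text{ for some }t\in T\}$. Define ideals $\mathfrak p_\alpha$ ($\alpha\ge1$ ordinals): $\mathfrak p_1:=\mathrm{ass}_l(S,R)+\mathrm{ass}_r(S,R)$; $\mathfrak p_{\alpha+1}:=\pi_\alpha^{-1}(\mathrm{ass}_l(\pi_\alpha(S),R/\mathfrak p_\alpha)+\mathrm{ass}_r(\pi_\alpha(S),R/\mathfrak p_\alpha))$ with $\pi_\alpha:R\to R/\mathfrak p_\alpha$ canonical; $\mathfrak p_\alpha:=\bigcup_{\beta<\alpha}\mathfrak p_\beta$ for limit $\alpha$; $\mathfrak p(S):=\bigcup_\alpha\mathfrak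 p_\alpha$. $\mathcal J(R,S)$ is the set of ideals $\mathfrak b$ of $R$ such that $\pi_{\mathfrak b}(S)$ is a (left and right) denominator set of $R/\mathfrak b$ with $\mathrm{ass}(\pi_{\mathfrak b}(S))=0$, $\pi_{\mathfrak b}:R\to R/\mathfrak b$ canonical. *)

(* Subsets/ideals of R are predicates R -> Prop.
   Computations in a quotient ring R/I are written out on representatives:
   an element of R/I is represented by some x : R, and  x = y in R/I  means
   I (x - y).  Taking I := (fun x => x = 0) gives back R itself. *)
From mathcomp Require Import all_boot all_algebra.
Set Implicit Arguments. Unset Strict Implicit. Unset Printing Implicit Defensive.
Import GRing.Theory.
Local Open Scope ring_scope.

Section Defs.
Variable R : nzRingType.

Definition zero_ideal : R -> Prop := fun x => x = 0.

Definition is_ideal (I : R -> Prop) : Prop :=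
  I 0 /\ (forall x y, I x -> I y -> I (x - y)) /\
  (forall r x, I x -> I (r * x)) /\ (forall r x, I x -> I (x * r)).

Definition eqm (I : R -> Prop) (x y : R) : Prop := I (x - y).

(* class of x lies in pi_I(T) *)
Definition memT (I : R -> Prop) (T : R -> Prop) (x : R) : Prop :=
  exists t, T t /\ eqm I x t.

Definition mult_closed_mod (I T : R -> Prop) : Prop :=
  memT I T 1 /\ (forall x y, memT I T x -> memT I T y -> memT I T (x * y)) /\
  (forall x, memT I T x -> ~ eqm I x 0).

Definition ore_mod (I T : R -> Prop) : Prop :=
  mult_closed_mod I T /\
  (forall r s, memT I T s -> exists s' r', memT I T s' /\ eqm I (s' * r) (r' * s)) /\
  (forall r s, memT I T s -> exists s' r', memT I T s' /\ eqm I (r * s') (s * r')).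

Definition denominator_mod (I T : R -> Prop) : Prop :=
  ore_mod I T /\
  (forall r s, memT I T s -> eqm I (r * s) 0 -> exists t, memT I T t /\ eqm I (t * r) 0) /\
  (forall r s, memT I T s -> eqm I (s * r) 0 -> exists t, memT I T t /\ eqm I (r * t) 0).

(* preimage in R of ass_l(pi_I(T), R/I) = {b | t b = 0 for some t in pi_I(T)} *)
Definition ass_l_mod (I T : R -> Prop) : R -> Prop :=
  fun b => exists t, memT I T t /\ eqm I (t * b) 0.

(* preimage in R of ass_r(pi_I(T), R/I) = {b | b t = 0 for some t in pi_I(T)} *)
Definition ass_r_mod (I T : R -> Prop) : R -> Prop :=
  fun b => exists t, memT I T t /\ eqm I (b * t) 0.

Definition is_ore_set (S : R -> Prop) : Prop := ore_mod zero_ideal S.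
Definition is_denominator_set (S : R -> Prop) : Prop := denominator_mod zero_ideal S.
Definition ass (S : R -> Prop) : R -> Prop := ass_l_mod zero_ideal S.

(* pi_I^{-1}( ass_l(pi_I(S), R/I) + ass_r(pi_I(S), R/I) ) *)
Definition p_next (S I : R -> Prop) : R -> Prop :=
  fun x => exists a b, ass_l_mod I S a /\ ass_r_mod I S b /\ eqm I x (a + b).

Definition p_one (S : R -> Prop) : R -> Prop :=
  fun x => exists a b, ass_l_mod zero_ideal S a /\ ass_r_mod zero_ideal S b /\ x = a + b.

End Defs.

(* Ordinals >= 1, Brouwer-style with arbitrary (Type-indexed) suprema:
   ord1 = 1, ordS a = a+1, ordLim I f = sup_i f i. *)
Inductive ord : Type :=
| ord1 : ord
| ordS : ord -> ord
| ordLim : forall I : Type, (I -> ord) -> ord.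

Fixpoint p_alpha (R : nzRingType) (S : R -> Prop) (a : ord) : R -> Prop :=
  match a with
  | ord1 => p_one S
  | ordS b => p_next S (p_alpha S b)
  | @ordLim J f => fun x => exists i, p_alpha S (f i) x
  end.

Definition pS (R : nzRingType) (S : R -> Prop) : R -> Prop :=
  fun x => exists a, p_alpha S a x.

Definition J_set (R : nzRingType) (S : R -> Prop) (b : R -> Prop) : Prop :=
  is_ideal b /\ denominator_mod b S /\ (forall r, ass_l_mod b S r -> b r).

From Pilot Require Import Defs.
From mathcomp Require Import all_boot all_algebra.
Import GRing.Theory.
Local Open Scope ring_scope.
Set Implicit Arguments. Unset Strict Implicit. Unset Printing Implicit Defensive.

(* Call an ideal I S-saturated if s a ∈ I or a s ∈ I with s ∈ S forces a ∈ I.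
   Every saturated ideal contains every p_alpha (transfinite induction), and the
   members of J(R,S) are exactly the saturated ideals avoiding S.  The union of
   the finite stages p_1 ⊆ p_2 ⊆ ... is already a saturated ideal avoiding S,
   since a witness s a ∈ p_n puts a into p_(n+1); so p(S) equals this union and
   is the least member of J(R,S).  For a denominator set, ass(S) is itself a
   saturated ideal, and it is contained in p_1. *)

Section IdealClosure.
Variables (R : nzRingType) (I : R -> Prop).
Hypothesis idI : is_ideal I.

Lemma ideal0 : I 0.
Proof. by case: idI. Qed.

Lemma idealB x y : I x -> I y -> I (x - y).
Proof. by case: idI => _ [+ _]; apply. Qed.

Lemma idealN x : I x -> I (- x).
Proof. by move=> Ix; rewrite -sub0r; apply: idealB => //; apply: ideal0. Qed.

Lemma idealD x y : I x -> I y -> I (x + y).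
Proof. by move=> Ix Iy; rewrite -[y]opprK; apply: idealB => //; apply: idealN. Qed.

Lemma idealMl r x : I x -> I (r * x).
Proof. by case: idI => _ [_ [+ _]]; apply. Qed.

Lemma idealMr r x : I x -> I (x * r).
Proof. by case: idI => _ [_ [_ +]]; apply. Qed.

End IdealClosure.

Lemma eq_is_ideal (R : nzRingType) (I K : R -> Prop) :
  (forall x, I x <-> K x) -> is_ideal I -> is_ideal K.
Proof.
move=> eIK [I0 [IB [IMl IMr]]]; split; first exact/eIK.
split; first by move=> x y /eIK Ix /eIK Iy; apply/eIK/IB.
by split=> r x /eIK Ix; apply/eIK; [apply: IMl | apply: IMr].
Qed.

Lemma zero_ideal_is_ideal (R : nzRingType) : is_ideal (@zero_ideal R).
Proof.
rewrite /zero_ideal; split=> //; split; first by move=> x y -> ->; rewrite subrr.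
by split=> r x ->; rewrite ?mulr0 ?mul0r.
Qed.

Definition ideal_sum (R : nzRingType) (A B : R -> Prop) : R -> Prop :=
  fun x => exists a b, A a /\ B b /\ x = a + b.

Lemma ideal_sum_is_ideal (R : nzRingType) (A B : R -> Prop) :
  is_ideal A -> is_ideal B -> is_ideal (ideal_sum A B).
Proof.
move=> idA idB; split.
  by exists 0, 0; rewrite addr0; split; [|split]; rewrite //; apply: ideal0.
split.
  move=> _ _ [a [b [Aa [Bb ->]]]] [a' [b' [Aa' [Bb' ->]]]].
  exists (a - a'), (b - b'); split; first exact: idealB.
  by split; [exact: idealB | rewrite opprD addrACA].
split=> r _ [a [b [Aa [Bb ->]]]].
  exists (r * a), (r * b); rewrite mulrDr.
  by split; [|split]; first [exact: idealMl | done].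
exists (a * r), (b * r); rewrite mulrDl.
by split; [|split]; first [exact: idealMr | done].
Qed.

Lemma memT_zero_ideal (R : nzRingType) (S : R -> Prop) x :
  memT (@zero_ideal R) S x <-> S x.
Proof.
split=> [[t [St /subr0_eq ->]] // | Sx].
by exists x; split; rewrite // /eqm /zero_ideal subrr.
Qed.

Lemma eqm_zero_ideal (R : nzRingType) (x y : R) : eqm (@zero_ideal R) x y <-> x = y.
Proof. by split=> [/subr0_eq | ->]; rewrite // /eqm /zero_ideal subrr. Qed.

Definition assl (R : nzRingType) (S I : R -> Prop) : R -> Prop :=
  fun a => exists s, S s /\ I (s * a).

Definition assr (R : nzRingType) (S I : R -> Prop) : R -> Prop :=
  fun a => exists s, S s /\ I (a * s).

Definition saturated (R : nzRingType) (S I : R -> Prop) : Prop :=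
  (forall a, assl S I a -> I a) /\ (forall a, assr S I a -> I a).

Definition avoids (R : nzRingType) (S I : R -> Prop) : Prop :=
  forall s, S s -> ~ I s.

Section Saturation.
Variables (R : nzRingType) (S : R -> Prop).

Lemma memT_of_mem I s : is_ideal I -> S s -> memT I S s.
Proof. by move=> idI Ss; exists s; split; rewrite // /eqm subrr; apply: ideal0. Qed.

Lemma assl_of_ass_l_mod I K a : is_ideal K -> (forall x, I x -> K x) ->
  ass_l_mod I S a -> assl S K a.
Proof.
move=> idK IK [t [[s [Ss ets]] eta]]; exists s; split=> //.
have -> : s * a = (t * a - 0) - (t - s) * a by rewrite subr0 mulrBl subKr.
by apply: idealB => //; [apply: IK | apply: idealMr => //; apply: IK].
Qed.

Lemma assr_of_ass_r_mod I K a : is_ideal K -> (forall x, I x -> K x) ->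
  ass_r_mod I S a -> assr S K a.
Proof.
move=> idK IK [t [[s [Ss ets]] eat]]; exists s; split=> //.
have -> : a * s = (a * t - 0) - a * (t - s) by rewrite subr0 mulrBr subKr.
by apply: idealB => //; [apply: IK | apply: idealMl => //; apply: IK].
Qed.

Lemma ass_l_mod_of_assl I a : is_ideal I -> assl S I a -> ass_l_mod I S a.
Proof.
by move=> idI [s [Ss Isa]]; exists s; split; [exact: memT_of_mem | rewrite /eqm subr0].
Qed.

Lemma ass_r_mod_of_assr I a : is_ideal I -> assr S I a -> ass_r_mod I S a.
Proof.
by move=> idI [s [Ss Ias]]; exists s; split; [exact: memT_of_mem | rewrite /eqm subr0].
Qed.

Lemma eq_saturated I K : (forall x, I x <-> K x) -> saturated S I -> saturated S K.
Proof.
move=> eIK [satl satr]; split.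
  by move=> a [s [Ss /eIK Isa]]; apply/eIK/satl; exists s.
by move=> a [s [Ss /eIK Ias]]; apply/eIK/satr; exists s.
Qed.

Lemma p_one_p_next x : p_one S x <-> p_next S (@zero_ideal R) x.
Proof.
by split=> -[a [b [la [rb e]]]]; exists a, b; do 2!split=> //; apply/eqm_zero_ideal.
Qed.

Lemma p_next_sub_saturated I K x : is_ideal K -> saturated S K ->
  (forall y, I y -> K y) -> p_next S I x -> K x.
Proof.
move=> idK [satl satr] IK [a [b [la [rb e]]]].
have Ka : K a by apply/satl/(assl_of_ass_l_mod idK IK).
have Kb : K b by apply/satr/(assr_of_ass_r_mod idK IK).
by rewrite -(subrK (a + b) x); apply: idealD => //; [apply: IK | apply: idealD].
Qed.

Lemma pS_sub_saturated K x : is_ideal K -> saturated S K -> pS S x -> K x.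
Proof.
move=> idK satK [al]; elim: al x => [|al IH|J f IH] x /=.
- move/p_one_p_next; apply: p_next_sub_saturated => // y ->; exact: ideal0.
- exact: p_next_sub_saturated.
- by case=> i; apply: IH.
Qed.

Lemma J_set_saturated b : J_set S b -> saturated S b.
Proof.
move=> [idb [[_ [den_l _]] satl]]; split=> a.
  by move/(ass_l_mod_of_assl idb); apply: satl.
move=> [s [Ss bas]]; apply: satl; apply: den_l (memT_of_mem idb Ss) _.
by rewrite /eqm subr0.
Qed.

End Saturation.

Section OreSet.
Variables (R : nzRingType) (S : R -> Prop).
Hypothesis oreS : is_ore_set S.

Lemma ore1 : S 1.
Proof. by case: oreS => -[/memT_zero_ideal]. Qed.

Lemma oreM s t : S s -> S t -> S (s * t).
Proof.
case: oreS => -[_ [SM _] _] /memT_zero_ideal Ss /memT_zero_ideal St.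
exact/memT_zero_ideal/SM.
Qed.

Lemma ore_neq0 s : S s -> s <> 0.
Proof.
case: oreS => -[_ [_ S0] _] /memT_zero_ideal Ss s0.
by apply: (S0 s Ss); apply/eqm_zero_ideal.
Qed.

Lemma ore_left r s : S s -> exists s' r', S s' /\ s' * r = r' * s.
Proof.
case: oreS => _ [oreL _] /memT_zero_ideal Ss.
have [s' [r' [/memT_zero_ideal S's /eqm_zero_ideal e]]] := oreL r s Ss.
by exists s', r'.
Qed.

Lemma ore_right r s : S s -> exists s' r', S s' /\ r * s' = s * r'.
Proof.
case: oreS => _ [_ oreR] /memT_zero_ideal Ss.
have [s' [r' [/memT_zero_ideal S's /eqm_zero_ideal e]]] := oreR r s Ss.
by exists s', r'.
Qed.

Lemma assl_is_ideal I : is_ideal I -> is_ideal (assl S I).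
Proof.
move=> idI; split; first by exists 1; rewrite mulr0; split; [exact: ore1 | exact: ideal0].
split.
  move=> a b [s [Ss Isa]] [t [St Itb]].
  have [s' [r' [S's e]]] := ore_left s St.
  exists (s' * s); split; first exact: oreM.
  rewrite mulrBr {2}e -!mulrA; apply: idealB => //; exact: idealMl.
split=> r a [s [Ss Isa]].
  have [s' [r' [S's e]]] := ore_left r Ss.
  by exists s'; split=> //; rewrite mulrA e -mulrA; apply: idealMl.
by exists s; split=> //; rewrite mulrA; apply: idealMr.
Qed.

Lemma assr_is_ideal I : is_ideal I -> is_ideal (assr S I).
Proof.
move=> idI; split; first by exists 1; rewrite mul0r; split; [exact: ore1 | exact: ideal0].
split.
  move=> a b [s [Ss Ias]] [t [St Ibt]].
  have [s' [r' [S's e]]] := ore_right s St.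
  exists (s * s'); split; first exact: oreM.
  rewrite mulrBl {2}e !mulrA; apply: idealB => //; exact: idealMr.
split=> r a [s [Ss Ias]].
  by exists s; split=> //; rewrite -mulrA; apply: idealMl.
have [s' [r' [S's e]]] := ore_right r Ss.
by exists s'; split=> //; rewrite -mulrA e mulrA; apply: idealMr.
Qed.

Lemma ideal_sub_assl I x : is_ideal I -> I x -> assl S I x.
Proof. by move=> idI Ix; exists 1; rewrite mul1r; split=> //; exact: ore1. Qed.

(* Modulo an ideal I, p_next S I is the sum of the two annihilator ideals;
   I itself is absorbed into the left one. *)
Lemma p_nextE I x : is_ideal I ->
  p_next S I x <-> ideal_sum (assl S I) (assr S I) x.
Proof.
move=> idI; split=> [[a [b [la [rb e]]]] | [a [b [la [rb ->]]]]].
- exists (a + (x - (a + b))), b; split.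
    apply: idealD; [exact: assl_is_ideal | exact: assl_of_ass_l_mod la |].
    exact: ideal_sub_assl.
  by split; [exact: assr_of_ass_r_mod rb | rewrite addrAC [RHS]addrC subrK].
- exists a, b; split; first exact: ass_l_mod_of_assl.
  by split; [exact: ass_r_mod_of_assr | rewrite /eqm subrr; exact: ideal0].
Qed.

Lemma p_next_is_ideal I : is_ideal I -> is_ideal (p_next S I).
Proof.
move=> idI; apply: (eq_is_ideal (I := ideal_sum (assl S I) (assr S I))).
  by move=> x; apply: iff_sym; apply: p_nextE.
by apply: ideal_sum_is_ideal; [exact: assl_is_ideal | exact: assr_is_ideal].
Qed.

Lemma p_next_avoids I : is_ideal I -> avoids S I -> avoids S (p_next S I).
Proof.
move=> idI avI s Ss /(p_nextE _ idI) [a [b [[s1 [Ss1 Ia]] [[s2 [Ss2 Ib]] e]]]].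
apply: (avI (s1 * s * s2)); first by apply: oreM => //; apply: oreM.
rewrite e mulrDr mulrDl -[s1 * b * s2]mulrA.
by apply: idealD => //; [exact: idealMr | exact: idealMl].
Qed.

Lemma assl_sub_p_next I a : is_ideal I -> assl S I a -> p_next S I a.
Proof.
move=> idI la; apply/(p_nextE _ idI); exists a, 0; rewrite addr0; split=> //.
by split=> //; apply: ideal0; exact: assr_is_ideal.
Qed.

Lemma assr_sub_p_next I a : is_ideal I -> assr S I a -> p_next S I a.
Proof.
move=> idI ra; apply/(p_nextE _ idI); exists 0, a; rewrite add0r; split=> //.
by apply: ideal0; exact: assl_is_ideal.
Qed.

(* [stage n] is the paper's p_(n+1). *)
Definition stage n : R -> Prop := p_alpha S (iter n Defs.ordS Defs.ord1).

Lemma stage_ideal_avoids n : is_ideal (stage n) /\ avoids S (stage n).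
Proof.
elim: n => [|n [idn avn]]; last by split; [exact: p_next_is_ideal | exact: p_next_avoids].
have id0 := @zero_ideal_is_ideal R.
have av0 : avoids S (@zero_ideal R) by move=> s /ore_neq0.
split; last by move=> s Ss /p_one_p_next; apply: p_next_avoids Ss.
apply: (eq_is_ideal (I := p_next S (@zero_ideal R))) (p_next_is_ideal id0) => x.
exact: iff_sym (p_one_p_next S x).
Qed.

Lemma stage_le m n x : (m <= n)%N -> stage m x -> stage n x.
Proof.
move/subnK <-; elim: (n - m)%N => [|k IH] // /IH xk.
have idk := (stage_ideal_avoids (k + m)).1.
exact: assl_sub_p_next idk (ideal_sub_assl idk xk).
Qed.

Definition omega_stage : R -> Prop := fun x => exists n, stage n x.

Lemma omega_stage_is_ideal : is_ideal omega_stage.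
Proof.
have idn n := (stage_ideal_avoids n).1.
split; first by exists 0%N; apply: ideal0.
split.
  move=> x y [m xm] [n yn]; exists (maxn m n); apply: idealB => //.
    exact: stage_le (leq_maxl m n) xm.
  exact: stage_le (leq_maxr m n) yn.
by split=> r x [n xn]; exists n; [apply: idealMl | apply: idealMr].
Qed.

Lemma omega_stage_avoids : avoids S omega_stage.
Proof. by move=> s Ss [n]; apply: (stage_ideal_avoids n).2. Qed.

Lemma omega_stage_saturated : saturated S omega_stage.
Proof.
have idn n := (stage_ideal_avoids n).1.
split=> a [s [Ss [n san]]]; exists n.+1.
  by apply: (assl_sub_p_next (idn n)); exists s.
by apply: (assr_sub_p_next (idn n)); exists s.
Qed.

Lemma pS_omega_stage x : pS S x <-> omega_stage x.
Proof.
split; last by case=> n xn; exists (iter n Defs.ordS Defs.ord1).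
exact: pS_sub_saturated omega_stage_is_ideal omega_stage_saturated.
Qed.

Lemma ore_mod_avoids I : is_ideal I -> avoids S I -> ore_mod I S.
Proof.
move=> idI avI; split; last split.
- split; first exact: memT_of_mem ore1.
  split=> [x y [s [Ss exs]] [t [St eyt]] | x [s [Ss exs]] ex0].
    exists (s * t); split; first exact: oreM.
    rewrite /eqm; have -> : x * y - s * t = (x - s) * y + s * (y - t).
      by rewrite mulrBl mulrBr addrA subrK.
    by apply: idealD => //; [exact: idealMr | exact: idealMl].
  apply: (avI s Ss); have -> : s = (x - 0) - (x - s) by rewrite subr0 subKr.
  exact: idealB.
- move=> r x [s [Ss exs]]; have [s' [r' [S's e]]] := ore_left r Ss.
  exists s', r'; split; first exact: memT_of_mem.
  by rewrite /eqm e -mulrBr; apply: (idealMl idI); rewrite -opprB; exact: idealN.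
- move=> r x [s [Ss exs]]; have [s' [r' [S's e]]] := ore_right r Ss.
  exists s', r'; split; first exact: memT_of_mem.
  by rewrite /eqm e -mulrBl; apply: (idealMr idI); rewrite -opprB; exact: idealN.
Qed.

Lemma saturated_J_set I : is_ideal I -> avoids S I -> saturated S I -> J_set S I.
Proof.
move=> idI avI [satl satr]; split=> //; split; last first.
  by move=> r /(assl_of_ass_l_mod idI (fun _ h => h)); apply: satl.
have mem1 := memT_of_mem idI ore1.
split; first exact: ore_mod_avoids.
split=> r x [s [Ss exs]] e; exists 1; split=> //; rewrite /eqm subr0.
  rewrite mul1r; apply: satr; exists s; split=> //.
  have -> : r * s = (r * x - 0) - r * (x - s) by rewrite subr0 mulrBr subKr.
  by apply: idealB => //; apply: idealMl.
rewrite mulr1; apply: satl; exists s; split=> //.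
have -> : s * r = (x * r - 0) - (x - s) * r by rewrite subr0 mulrBl subKr.
by apply: idealB => //; apply: idealMr.
Qed.

Lemma pS_J_set : J_set S (pS S).
Proof.
have eqpS x : omega_stage x <-> pS S x := iff_sym (pS_omega_stage x).
apply: saturated_J_set.
- exact: eq_is_ideal eqpS omega_stage_is_ideal.
- by move=> s Ss /pS_omega_stage; apply: omega_stage_avoids.
- exact: eq_saturated eqpS omega_stage_saturated.
Qed.

Lemma ass_assl x : ass S x <-> assl S (@zero_ideal R) x.
Proof.
have id0 := @zero_ideal_is_ideal R.
by split; [exact: assl_of_ass_l_mod | exact: ass_l_mod_of_assl].
Qed.

Lemma ass_saturated : is_denominator_set S -> saturated S (assl S (@zero_ideal R)).
Proof.
move=> [_ [den_l _]]; rewrite /zero_ideal; split=> a [s [Ss [t [St e]]]].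
  by exists (t * s); split; [exact: oreM | rewrite -mulrA].
have [u [/memT_zero_ideal Su /eqm_zero_ideal eu]] :
  exists u, memT (@zero_ideal R) S u /\ eqm (@zero_ideal R) (u * (t * a)) 0.
  by apply: den_l (proj2 (memT_zero_ideal S s) Ss) _; apply/eqm_zero_ideal;
    rewrite -mulrA.
by exists (u * t); split; [exact: oreM | rewrite -mulrA].
Qed.

Lemma pS_ass : is_denominator_set S -> forall x, pS S x <-> ass S x.
Proof.
move=> denS x; split.
  move/(pS_sub_saturated (assl_is_ideal (@zero_ideal_is_ideal R)) (ass_saturated denS)).
  by move/ass_assl.
move=> lx; exists Defs.ord1, x, 0; rewrite addr0; split=> //; split=> //.
apply: ass_r_mod_of_assr (@zero_ideal_is_ideal R) _.
by exists 1; split; [exact: ore1 | rewrite /zero_ideal mul0r].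
Qed.

End OreSet.

Unset Implicit Arguments.

Theorem theorem4p15 (R : nzRingType) (S : R -> Prop) :
  is_ore_set S ->
  (exists b, J_set S b) /\
  (J_set S (pS S) /\ (forall b, J_set S b -> forall x, pS S x -> b x)) /\
  (forall a : R -> Prop, is_denominator_set S ->
     (forall x, ass S x <-> a x) -> forall x, pS S x <-> a x).
Proof.
move=> oreS; have JpS := pS_J_set oreS.
split; first by exists (pS S).
split; first by split=> // b Jb x; apply: pS_sub_saturated Jb.1 (J_set_saturated Jb).
by move=> a denS assa x; apply: iff_trans (pS_ass oreS denS x) (assa x).
Qed.
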